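(* Let $\mu$ satisfy Assumption A (see context), let $t>1$, and let $\mathcal{K}$ be a compact subset of $\mathbb{C}^+\cup\mathbb{R}$. Then there exists a constant $C>0$ such that $|\omega_t(z)|\le C$ for all $z\in\mathcal{K}$.
   Context: Assumption A: $n_{\mathrm{ac}},n_{\mathrm{pp}},n^{\mathrm{out}}_{\mathrm{pp}}\ge1$ integers; $\mu$ is a compactly supported Borel probability measure on $\mathbb{R}$ whose singular part is supported on a finite set $\{x_1,\dots,x_{n_{\mathrm{pp}}}\}$, whose absolutely continuous part $\mu_{\mathrm{ac}}$ is supported on $n_{\mathrm{ac}}$ intervals $[E_j^-,E_j^+]$, with exactly $n^{\mathrm{out}}_{\mathrm{pp}}$ atoms outside $\mathrm{supp}(\mu_{\mathrm{ac}})$, no atom at the endpoints $E_j^\pm$, and density $\rho$ with $C_j^{-1}<\rho(x)/\big((x-E_j^-)^{t_j^-}(E_j^+-x)^{t_j^+}\big)<C_j$ a.e. on $[E_j^-,E_j^+]$ for some $-1<t_j^\pm<1$, $C_j\ge1$. $m_\mu(z)=\int\frac{1}{x-z}\mu(dx)$, $F_\mu=-1/m_\mu$. $\omega_t:\mathbb{C}^+\to\mathbb{C}^+$ is the analytic subordination function with $\mathrm{Im}\,\omega_t(z)\ge\mathrm{Im}\,z$, $\omega_t(i\eta)/(i\eta)\to1$, $t\omega_t(z)-z=(t-1)F_\mu(\omega_t(z))$, extended continuously to $\mathbb{C}^+\cup\mathbb{R}$ with values in $\mathbb{C}^+\cup\mathbb{R}\cup\{\infty\}$. *)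

From HB Require Import structures.
From mathcomp Require Import all_boot all_order all_algebra.
From mathcomp Require Import all_classical all_reals all_analysis.
From mathcomp Require Import complex.
Import Order.TTheory GRing.Theory Num.Theory.
Import numFieldTopology.Exports numFieldNormedType.Exports.

Set Implicit Arguments.
Unset Strict Implicit.
Unset Printing Implicit Defensive.

Local Open Scope ring_scope.
Local Open Scope classical_set_scope.
Local Open Scope complex_scope.

Definition Cplx (R : realType) := (R[i])^o.

Definition closed_uhp (R : realType) : set (Cplx R) :=
  [set z | 0 <= complex.Im z].

Definition stieltjes (R : realType) (mu : probability R R) (z : Cplx R)
  : Cplx R :=
  (Rintegral mu setT (fun x : R => complex.Re ((x%:C - z)^-1)))
  +i* (Rintegral mu setT (fun x : R => complex.Im ((x%:C - z)^-1))).

Definition F_mu (R : realType) (mu : probability R R) (z : Cplx R) : Cplx R :=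
  - (stieltjes mu z)^-1.

Definition assumptionA (R : realType) (mu : probability R R)
  (nac npp nppout : nat) : Prop :=
  [/\ (1 <= nac)%N, (1 <= npp)%N, (1 <= nppout)%N &
  exists (x p : 'I_npp -> R) (Em Ep tm tp Cj : 'I_nac -> R) (rho : R -> R),
  [/\
    (* atoms x_1..x_npp, pairwise distinct, with positive masses;
       n_ac disjoint compact intervals [E_j^-, E_j^+], ordered *)
    [/\ injective x, (forall i, 0 < p i), (forall j, Em j < Ep j) &
      (forall j k : 'I_nac, (j < k)%N -> Ep j < Em k)],
    (* density rho of the a.c. part, vanishing outside the intervals *)
    [/\ measurable_fun setT rho, (forall y, 0 <= rho y) &
        (forall y, (forall j, ~ (Em j <= y <= Ep j)) -> rho y = 0)],
    (forall A : set R, measurable A ->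
       mu A = ((\int[lebesgue_measure]_(y in A) (rho y)%:E)
               + (\sum_(i < npp | x i \in A) p i)%:E)%E),
    (* no atom at the endpoints; exactly nppout atoms outside supp(mu_ac) *)
    (forall i j, x i <> Em j /\ x i <> Ep j) /\
      #|[set i : 'I_npp | [forall j, ~~ (Em j <= x i <= Ep j)]]| = nppout &
    (forall j, [/\ -1 < tm j < 1, -1 < tp j < 1, 1 <= Cj j &
       {ae lebesgue_measure, forall y : R, Em j <= y <= Ep j ->
          (Cj j)^-1 < rho y / ((y - Em j) `^ (tm j) * (Ep j - y) `^ (tp j))
          < Cj j}])]].

(* Continuity at z0, relative to D, of a map f : C -> C \cup {oo}
   (None encodes the point oo of the Riemann sphere). *)
Definition sphere_cont_at (R : realType) (D : set (Cplx R))
  (f : Cplx R -> option (Cplx R)) (z0 : Cplx R) : Prop :=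
  match f z0 with
  | Some w => forall e : R, 0 < e -> exists2 d : R, 0 < d &
      forall z, D z -> `|z - z0| < d%:C ->
        exists2 w', f z = Some w' & `|w' - w| < e%:C
  | None => forall M : R, exists2 d : R, 0 < d &
      forall z, D z -> `|z - z0| < d%:C ->
        forall w', f z = Some w' -> M%:C < `|w'|
  end.

Definition is_subordination (R : realType) (mu : probability R R) (t : R)
  (omega : Cplx R -> Cplx R) : Prop :=
  [/\
      (forall z : Cplx R, 0 < complex.Im z -> derivable omega z 1),
      (forall z : Cplx R, 0 < complex.Im z ->
          complex.Im z <= complex.Im (omega z)),
      ((fun eta : R => omega (0 +i* eta) / (0 +i* eta)) @ +oo --> (1 : Cplx R)) &
      (forall z : Cplx R, 0 < complex.Im z ->
          t%:C * omega z - z = (t - 1)%:C * F_mu mu (omega z))].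

Definition is_continuous_extension (R : realType)
  (omega : Cplx R -> Cplx R) (omega_ext : Cplx R -> option (Cplx R)) : Prop :=
  [/\ (forall z : Cplx R, 0 < complex.Im z -> omega_ext z = Some (omega z)),
      (forall z w : Cplx R, closed_uhp z -> omega_ext z = Some w ->
          0 <= complex.Im w) &
      (forall z : Cplx R, closed_uhp z ->
          sphere_cont_at (@closed_uhp R) omega_ext z)].

(** The proof only uses that [mu] has compact support, say in [[-B, B]].
    For [|w| >= 8B], [1 + w m_mu(w) = \int x/(x - w) dmu(x)] has modulus at
    most [4B/|w| <= 1/2], which forces [|m_mu(w)| >= 1/(2|w|)] and then
    [|F_mu(w) - w| = |1 + w m_mu(w)| / |m_mu(w)| <= 8B].  The subordination
    equation reads [omega - z = (t - 1) (F_mu(omega) - omega)], so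
    [|omega(z)| <= |z| + 8Bt] on the upper half plane; continuity of the
    extension carries this bound to the real axis, and [|z|] is bounded on the
    compact set [K]. *)

From HB Require Import structures.
From mathcomp Require Import all_boot all_order all_algebra.
From mathcomp Require Import all_classical all_reals all_analysis.
From mathcomp Require Import complex measurable_realfun ring lra.
Import Order.TTheory GRing.Theory Num.Theory.
Import numFieldTopology.Exports numFieldNormedType.Exports.
Import Normc.
Local Open Scope ring_scope.
Local Open Scope classical_set_scope.
Local Open Scope complex_scope.

Section ComplexModulus.
Context {R : rcfType}.
Implicit Types x y z : R[i].

Lemma normcE z : `|z| = (normc z)%:C.
Proof. by case: z. Qed.

Lemma normc_ge0 z : 0 <= normc z.
Proof. by case: z => a b; exact: sqrtr_ge0. Qed.

Lemma normc_eq0 z : (normc z == 0) = (z == 0).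
Proof. by apply/eqP/eqP => [/eq0_normc|->]; last exact: normc0. Qed.

Lemma normcR (a : R) : normc a%:C = `|a|.
Proof. by rewrite /= expr0n addr0 sqrtr_sqr. Qed.

Lemma normc_iR (a : R) : normc (0 +i* a) = `|a|.
Proof. by rewrite /= expr0n add0r sqrtr_sqr. Qed.

Lemma normc_Re z : `|complex.Re z| <= normc z.
Proof.
by case: z => a b; rewrite /= -sqrtr_sqr ler_wsqrtr // lerDl sqr_ge0.
Qed.

Lemma normc_Im z : `|complex.Im z| <= normc z.
Proof.
by case: z => a b; rewrite /= -sqrtr_sqr ler_wsqrtr // lerDr sqr_ge0.
Qed.

Lemma normc_le_ReIm z : normc z <= `|complex.Re z| + `|complex.Im z|.
Proof.
case: z => a b /=; have ab0 : 0 <= `|a| + `|b| by rewrite addr_ge0.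
rewrite -{1}(ger0_norm ab0) -(sqrtr_sqr (`|a| + `|b|)) ler_wsqrtr //.
rewrite sqrrD !real_normK ?num_real // -addrA lerD2l lerDr.
by rewrite mulrn_wge0 ?mulr_ge0.
Qed.

Lemma lerB_normc x y : normc x - normc y <= normc (x - y).
Proof. by have := le_normcD (x - y) y; rewrite subrK; lra. Qed.

Lemma distcC x y : normc (x - y) = normc (y - x).
Proof. by rewrite -normcN opprB. Qed.

End ComplexModulus.

Lemma sumr_ge_term {R : numDomainType} {n : nat} (F : 'I_n -> R) i :
  (forall j, 0 <= F j) -> F i <= \sum_j F j.
Proof. by move=> F0; rewrite (bigD1 i) //= lerDl sumr_ge0. Qed.

Lemma measurable_normr_gt {R : realType} (B : R) :
  measurable [set x : R | B < `|x|].
Proof.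
have := @normr_measurable R setT measurableT _ (measurable_itv `]B, +oo[%R).
by rewrite setTI; congr measurable; apply/seteqP; split => y /=;
  rewrite in_itv /= andbT.
Qed.

Lemma assumptionA_bounded_support {R : realType} {mu : probability R R}
    {nac npp nppout : nat} :
  assumptionA mu nac npp nppout ->
  exists2 B : R, 0 < B & mu [set x | B < `|x|] = 0%E.
Proof.
case=> _ _ _ [x [p [Em [Ep [_ [_ [_ [rho [_ [_ _ rho0] mu_dec _ _]]]]]]]]].
set Sx := \sum_i `|x i|; set SE := \sum_j (`|Em j| + `|Ep j|).
have Sx0 : 0 <= Sx by exact: sumr_ge0.
have SE0 : 0 <= SE by apply: sumr_ge0 => j _; rewrite addr_ge0.
exists (1 + Sx + SE); first lra.
have atom_in i : `|x i| <= 1 + Sx + SE.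
  have := sumr_ge_term (fun i => `|x i|) i (fun j => normr_ge0 _).
  by rewrite -/Sx; lra.
have interval_in j y : Em j <= y <= Ep j -> `|y| <= 1 + Sx + SE.
  move=> /andP[hm hp].
  have := sumr_ge_term (fun j => `|Em j| + `|Ep j|) j
    (fun j => addr_ge0 (normr_ge0 _) (normr_ge0 _)); rewrite -/SE.
  have := ler_norm (Ep j); have := ler_norm (- Em j); rewrite normrN.
  have := normr_ge0 (Em j); have := normr_ge0 (Ep j).
  by rewrite ler_norml; lra.
rewrite mu_dec; last exact: measurable_normr_gt.
rewrite integral0_eq; last first.
  move=> y /= yB; rewrite rho0 // => j /interval_in; lra.
rewrite big_pred0 ?add0e // => i; apply/negbTE/negP.
by rewrite in_setE /=; apply/negP; rewrite -leNgt.
Qed.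

Section ComplexIntegral.
Context {R : realType} (mu : probability R R).

Definition cintegral (h : R -> R[i]) : R[i] :=
  (\int[mu]_x complex.Re (h x)) +i* (\int[mu]_x complex.Im (h x)).

Definition cbounded_measurable (h : R -> R[i]) : Prop :=
  [/\ measurable_fun setT (fun x => complex.Re (h x)),
      measurable_fun setT (fun x => complex.Im (h x)) &
      exists M, forall x, normc (h x) <= M].

Lemma integrable_bounded (D : set R) (f : R -> R) (M : R) :
  measurable D -> measurable_fun D f -> (forall x, `|f x| <= M) ->
  mu.-integrable D (EFin \o f).
Proof.
move=> mD mf fM; apply: measurable_bounded_integrable => //.
  exact: le_lt_trans (probability_le1 mu mD) (ltey _).
exists M; split; first exact: num_real.
by move=> M' MM' x _; apply: le_trans (fM x) (ltW MM').
Qed.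

Lemma cbounded_measurable_integrable {h} : cbounded_measurable h ->
  mu.-integrable setT (EFin \o (fun x => complex.Re (h x))) /\
  mu.-integrable setT (EFin \o (fun x => complex.Im (h x))).
Proof.
case=> mRe mIm [M hM]; split; apply: (@integrable_bounded _ _ M) => // x /=.
  apply: (le_trans _ (hM x)); exact: normc_Re.
apply: (le_trans _ (hM x)); exact: normc_Im.
Qed.

Lemma cbounded_measurable_affine a c h : cbounded_measurable h ->
  cbounded_measurable (fun x => a + c * h x).
Proof.
case: a c => a1 a2 [c1 c2] [mRe mIm [M hM]]; split.
- rewrite (_ : (fun x => _) =
      fun x => a1 + (c1 * complex.Re (h x) - c2 * complex.Im (h x))).
    by apply: measurable_funD => //; apply: measurable_funB;
      exact: measurable_funM.
  by apply: funext => x /=; case: (h x).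
- rewrite (_ : (fun x => _) =
      fun x => a2 + (c1 * complex.Im (h x) + c2 * complex.Re (h x))).
    by apply: measurable_funD => //; apply: measurable_funD;
      exact: measurable_funM.
  by apply: funext => x /=; case: (h x).
- exists (normc (a1 +i* a2) + normc (c1 +i* c2) * M) => x.
  apply: le_trans (le_normcD _ _) _; rewrite lerD2l normcM.
  by apply: ler_wpM2l; [exact: normc_ge0 | exact: hM].
Qed.

Lemma cintegral_affine a c h : cbounded_measurable h ->
  cintegral (fun x => a + c * h x) = a + c * cintegral h.
Proof.
move=> hb; have [iRe iIm] := cbounded_measurable_integrable hb.
have iC (r : R) : mu.-integrable setT (EFin \o (fun=> r)).
  exact: (@integrable_bounded _ _ `|r|).
have iZ k f : mu.-integrable setT (EFin \o f) ->
    mu.-integrable setT (EFin \o (fun x => k * f x)).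
  exact: integrableZl.
have Rint_cst (r : R) : \int[mu]_(x in setT) r = r.
  by rewrite Rintegral_cst // (congr1 fine (probability_setT mu)) mulr1.
case: a c => a1 a2 [c1 c2]; rewrite /cintegral /=.
have eRe x : complex.Re (a1 +i* a2 + c1 +i* c2 * h x) =
    a1 + (c1 * complex.Re (h x) - c2 * complex.Im (h x)) by case: (h x).
have eIm x : complex.Im (a1 +i* a2 + c1 +i* c2 * h x) =
    a2 + (c1 * complex.Im (h x) + c2 * complex.Re (h x)) by case: (h x).
have iRe1 := iZ c1 _ iRe; have iIm1 := iZ c1 _ iIm.
have iRe2 := iZ c2 _ iRe; have iIm2 := iZ c2 _ iIm.
have iA1 := iC a1; have iA2 := iC a2.
rewrite (funext eRe) (funext eIm) RintegralD //; last first.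
  exact: (integrableB measurableT iRe1 iIm2).
rewrite RintegralB // RintegralD //; last first.
  exact: (integrableD measurableT iIm1 iRe2).
rewrite RintegralD // !RintegralZl // !Rint_cst.
by apply/eqP; rewrite eq_complex /= !eqxx.
Qed.

Context {B : R}.
Hypothesis mu_out : mu [set x | B < `|x|] = 0%E.

Let ball_B := [set x : R | `|x| <= B].

Let ball_BE : ball_B = ~` [set x | B < `|x|].
Proof. by apply/seteqP; split => x; rewrite /ball_B /= leNgt => /negP. Qed.

Let measurable_ball_B : measurable ball_B.
Proof. by rewrite ball_BE; apply: measurableC; exact: measurable_normr_gt. Qed.

Let mu_ball_B : mu ball_B = 1%E.
Proof.
rewrite ball_BE probability_setC ?mu_out ?sube0 //.
exact: measurable_normr_gt.
Qed.

Lemma Rintegral_concentrated_le (f : R -> R) (M m : R) :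
  measurable_fun setT f -> (forall x, `|f x| <= M) ->
  (forall x, `|x| <= B -> `|f x| <= m) -> `|\int[mu]_x f x| <= m.
Proof.
move=> mf fM fm.
have mfB : measurable_fun ball_B f by exact: measurable_funS mf.
have -> : \int[mu]_x f x = \int[mu]_(x in ball_B) f x.
  rewrite /Rintegral (negligible_integral (measurable_normr_gt B)) //.
    by rewrite setTD -ball_BE.
  exact: (@integrable_bounded _ _ M).
apply: le_trans (le_normr_Rintegral _ _) _ => //.
  exact: (@integrable_bounded _ _ M).
apply: le_trans (@le_Rintegral _ _ _ mu _ _ (cst m) _ _ _ _) _ => //.
- apply: (@integrable_bounded _ _ M) => //; first exact: measurableT_comp.
  by move=> x; rewrite normr_id.
- exact: (@integrable_bounded _ _ `|m|).
by rewrite Rintegral_cst // (congr1 fine mu_ball_B) mulr1.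
Qed.

Lemma normc_cintegral_le h m : cbounded_measurable h ->
  (forall x, `|x| <= B -> normc (h x) <= m) -> normc (cintegral h) <= m + m.
Proof.
case=> mRe mIm [M hM] hm; apply: le_trans; first exact: normc_le_ReIm.
apply: lerD; apply: (@Rintegral_concentrated_le _ M) => // x.
- apply: (le_trans _ (hM x)); exact: normc_Re.
- by move=> /hm; apply: le_trans; exact: normc_Re.
- apply: (le_trans _ (hM x)); exact: normc_Im.
- by move=> /hm; apply: le_trans; exact: normc_Im.
Qed.

End ComplexIntegral.

Lemma continuous_inv_sqrD {R : realType} (a b : R) : b != 0 ->
  continuous (fun x : R => ((x - a) ^+ 2 + b ^+ 2)^-1).
Proof.
move=> b0 x; apply: (@continuousV _ _ (fun x => (x - a) ^+ 2 + b ^+ 2)).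
  by rewrite gt_eqF // ltr_wpDl ?sqr_ge0 // exprn_even_gt0.
apply: continuousD; last exact: cst_continuous.
by apply: (@continuousM _ _ (fun x => x - a) (fun x => x - a));
  apply: continuousB => //; exact: cst_continuous.
Qed.

Lemma cbounded_measurable_resolvent {R : realType} (w : R[i]) :
  0 < complex.Im w -> cbounded_measurable (fun x : R => (x%:C - w)^-1).
Proof.
case: w => a b /= b0.
have minv := continuous_measurable_fun (continuous_inv_sqrD a _ (lt0r_neq0 b0)).
split.
- rewrite (_ : (fun x => _) = fun x => (x - a) * ((x - a) ^+ 2 + b ^+ 2)^-1).
    by apply: measurable_funM => //; apply: measurable_funB.
  by apply: funext => x /=; congr (_ * (_ + _)^-1); ring.
- rewrite (_ : (fun x => _) = fun x => b * ((x - a) ^+ 2 + b ^+ 2)^-1).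
    exact: measurable_funM.
  apply: funext => x /=; rewrite -mulNr.
  by congr (_ * (_ + _)^-1); ring.
- exists b^-1 => x.
  have b_le : b <= normc (x%:C - a +i* b).
    apply: le_trans; last exact: normc_Im.
    by rewrite /= add0r normrN gtr0_norm.
  by rewrite normcV lef_pV2 ?posrE // (lt_le_trans b0 b_le).
Qed.

Section SubordinationBound.
Context {R : realType} {mu : probability R R} {B : R}.
Hypotheses (B_gt0 : 0 < B) (mu_out : mu [set x | B < `|x|] = 0%E).

Lemma normc_F_mu_subr_le (w : R[i]) : 0 < complex.Im w -> 8 * B <= normc w ->
  normc (F_mu mu w - w) <= 8 * B.
Proof.
move=> Imw wB.
have w_gt0 : 0 < normc w by apply: lt_le_trans wB; rewrite mulr_gt0.
set g := fun x : R => (x%:C - w)^-1.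
have gb : cbounded_measurable g := cbounded_measurable_resolvent w Imw.
set k := B / normc w.
have kw : k * normc w = B by rewrite /k divfK // gt_eqF.
have k0 : 0 <= k by rewrite divr_ge0 // ltW.
have xw_ge x : complex.Im w <= normc (x%:C - w).
  apply: le_trans; last exact: normc_Im.
  by case: (w) => a b; rewrite /= add0r normrN ler_norm.
have xw_gt0 x : 0 < normc (x%:C - w) := lt_le_trans Imw (xw_ge x).
have xw_neq0 x : x%:C - w != 0 by rewrite -normc_eq0 gt_eqF.
have gE x : 1 + w * g x = x%:C * g x.
  by rewrite /g; field; exact: xw_neq0.
have g_le x : `|x| <= B -> normc (1 + w * g x) <= k + k.
  move=> xB; rewrite gE normcM normcV normcR.
  have := lerB_normc w x%:C; rewrite normcR distcC => dist_ge.
  rewrite ler_pdivrMr //; nra.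
(* [stieltjes mu w] unfolds to [cintegral mu g]. *)
have e_le : normc (1 + w * stieltjes mu w) <= 4 * k.
  have := normc_cintegral_le mu mu_out _ (k + k)
    (cbounded_measurable_affine 1 w _ gb) g_le.
  by rewrite cintegral_affine //; lra.
set m := stieltjes mu w in e_le *; set e := 1 + w * m in e_le.
have wm_ge : 1 / 2 <= normc w * normc m.
  have := lerB_normc 1 e; rewrite /e opprD addNKr normcN normcM normc1; nra.
have m_gt0 : 0 < normc m by nra.
have m_neq0 : m != 0 by rewrite -normc_eq0 gt_eqF.
have -> : F_mu mu w - w = - e / m by rewrite /F_mu -/m /e; field.
rewrite normcM normcN normcV ler_pdivrMr //; nra.
Qed.

Lemma subordination_normc_le {t : R} {omega : Cplx R -> Cplx R} :
  1 <= t -> is_subordination mu t omega ->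
  forall z, 0 < complex.Im z -> normc (omega z) <= normc z + 8 * B * t.
Proof.
move=> t1 [_ Im_le _ omegaE] z Imz.
have Bt : B <= B * t by rewrite ler_peMr // ltW.
have [small|big] := ltP (normc (omega z)) (8 * B).
  by have := normc_ge0 z; lra.
have Imw : 0 < complex.Im (omega z) := lt_le_trans Imz (Im_le z Imz).
have shift : omega z - z = (t - 1)%:C * (F_mu mu (omega z) - omega z).
  by rewrite mulrBr -omegaE // rmorphB /=; ring.
have : normc (omega z - z) <= (t - 1) * (8 * B).
  rewrite shift normcM normcR ger0_norm ?subr_ge0 //.
  by apply: ler_wpM2l; [rewrite subr_ge0 | exact: normc_F_mu_subr_le].
have : normc (omega z) <= normc (omega z - z) + normc z.
  by have := le_normcD (omega z - z) z; rewrite subrK.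
have : (t - 1) * (8 * B) <= 8 * B * t.
  by rewrite mulrBl mul1r mulrC gerBl mulr_ge0 // ltW.
lra.
Qed.

End SubordinationBound.

Lemma closed_uhp_approx {R : realType} {z0 : Cplx R} {d : R} :
  closed_uhp z0 -> 0 < d ->
  exists z : Cplx R,
    [/\ 0 < complex.Im z, `|z - z0| < d%:C & normc z <= normc z0 + 1].
Proof.
rewrite /closed_uhp /= => Imz0 d0; set e := Num.min d 1 / 2.
have e0 : 0 < e by rewrite divr_gt0 // lt_min d0 ltr01.
have [ed e1] : e < d /\ e <= 1.
  by have := ge_min d d 1; have := ge_min 1 d 1; rewrite !lexx orbT /e; lra.
exists (z0 + 0 +i* e); split.
- by case: z0 Imz0 => a b /= b0; lra.
- by rewrite addrAC subrr add0r normcE ltcR normc_iR gtr0_norm.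
- apply: le_trans (le_normcD _ _) _; rewrite lerD2l.
  by rewrite normc_iR gtr0_norm.
Qed.

Lemma continuous_extension_normc_le {R : realType}
    {omega : Cplx R -> Cplx R} {omega_ext : Cplx R -> option (Cplx R)} {c : R} :
  is_continuous_extension omega omega_ext ->
  (forall z, 0 < complex.Im z -> normc (omega z) <= normc z + c) ->
  forall z0, closed_uhp z0 ->
  exists2 w, omega_ext z0 = Some w & normc w <= normc z0 + c + 2.
Proof.
move=> [extE _ ext_cont] omega_le z0 z0_uhp.
have near_z0 d : 0 < d -> exists2 z, `|z - z0| < d%:C &
    [/\ closed_uhp z, omega_ext z = Some (omega z)
      & normc (omega z) <= normc z0 + c + 1].
  move=> /(closed_uhp_approx z0_uhp) [z [Imz zz0 z_le]]; exists z => //.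
  split; [exact: ltW | exact: extE |].
  by have := omega_le z Imz; lra.
have := ext_cont z0 z0_uhp; rewrite /sphere_cont_at.
case: (omega_ext z0) => [w|] w_cont.
- exists w => //; have [d d0 hd] := w_cont 1 ltr01.
  have [z zz0 [z_uhp extz omega_z_le]] := near_z0 d d0.
  have [w'] := hd z z_uhp zz0; rewrite extz => -[<-].
  rewrite normcE ltcR => ww_lt.
  by have := lerB_normc w (omega z); rewrite distcC; lra.
- have [d d0 hd] := w_cont (normc z0 + c + 2).
  have [z zz0 [z_uhp extz omega_z_le]] := near_z0 d d0.
  by have := hd z z_uhp zz0 _ extz; rewrite normcE ltcR; lra.
Qed.

Lemma compact_normc_bounded {R : realType} {K : set (Cplx R)} :
  compact K -> exists r : R, forall z, K z -> normc z <= r.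
Proof.
rewrite compact_cover => Kcover.
have /Kcover [] : K `<=` \bigcup_(n : nat) [set z : Cplx R | normc z < n%:R].
  - by move=> z _; exists (Num.truncn (normc z)).+1 => //=; exact: truncnS_gt.
  - move=> n _; rewrite openE => z /= zn.
    apply/nbhs_ballP; exists ((n%:R - normc z)%:C).
      by rewrite /= ltcR subr_gt0.
    move=> y; rewrite -ball_normE /= normcE ltcR => yz.
    by have := lerB_normc y z; rewrite distcC; lra.
move=> D _ DcovK; exists (\max_(n <- finmap.enum_fset D) n)%:R.
move=> z /DcovK [n Dn zn]; apply: le_trans (ltW zn) _; rewrite ler_nat.
exact: (@leq_bigmax_seq _ _ xpredT id).
Qed.

Theorem lemma3p3 (R : realType) (mu : probability R R) (nac npp nppout : nat)
  (t : R) (omega : Cplx R -> Cplx R) (omega_ext : Cplx R -> option (Cplx R))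
  (K : set (Cplx R)) :
  assumptionA mu nac npp nppout ->
  1 < t ->
  is_subordination mu t omega ->
  is_continuous_extension omega omega_ext ->
  compact K -> K `<=` @closed_uhp R ->
  exists2 C : R, 0 < C &
    forall z, K z -> exists2 w, omega_ext z = Some w & `|w| <= C%:C.
Proof.
move=> muA t_gt1 omega_sub omega_ext_cont K_compact K_uhp.
have [B B_gt0 mu_out] := assumptionA_bounded_support muA.
have [r K_le] := compact_normc_bounded K_compact.
have ext_le := continuous_extension_normc_le omega_ext_cont
  (subordination_normc_le B_gt0 mu_out (ltW t_gt1) omega_sub).
exists (`|r| + 8 * B * t + 2).
  by have := normr_ge0 r; have := mulr_gt0 B_gt0 (lt_trans ltr01 t_gt1); lra.
move=> z Kz; have [w extz w_le] := ext_le z (K_uhp z Kz).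
exists w => //; rewrite normcE lecR.
by have := K_le z Kz; have := ler_norm r; lra.
Qed.
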